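(* Let $S$ be a memory system satisfying the Data Independence assumption. Then for all $n,m \geq 1$: every trace of $S(n,m)$ is sequentially consistent if and only if every unambiguous trace of $S(n,m)$ is sequentially consistent.
   Context: Notation: $\mathbb{N}_n=\{1,\dots,n\}$, $\mathbb{W}_n=\{0,1,\dots,n\}$, $\mathbb{W}=\{0,1,2,\dots\}$. For $n,m,v\ge 1$ the memory events are $E(n,m,v)=\{R,W\}\times\mathbb{N}_n\times\mathbb{N}_m\times\mathbb{W}_v$ (read events have first component $R$, write events $W$); for $e=\langle a,b,c,d\rangle$ write $op(e)=a$, $proc(e)=b$ (processor), $loc(e)=c$ (location), $data(e)=d$. The value $0$ models the initial value of every location. A memory system is a family $S=(S(n,m,v))_{n,m,v\ge1}$ where $S(n,m,v)$ is a regular set of finite sequences (runs) over an alphabet $E^a(n,m,v)\supseteq E(n,m,v)$ (letters outside $E(n,m,v)$ are internal events); $S(n,m)=\bigcup_{v\ge1}S(n,m,v)$. The trace of a run is its subsequence of memory events; the traces of $S(n,m,v)$ (resp. $S(n,m)$) are the traces of its runs. For a finite sequence $\tau$ of memory events with positions $1,\dots,|\tau|$: $P(\tau,i)=\{k: proc(\tau(k))=i\}$, $L(\tau,j)=\{k: loc(\tau(k))=j\}$, $L^w(\tau,j)=\{k\in L(\tau,j): op(\tau(k))=W\}$. A trace $\tau$ is unambiguous if for every location $j$ and every $x\in L^w(\tau,j)$: $data(\tau(x))\ne0$ and $data(\tau(x))\ne data(\tau(y))$ for all $y\in L^w(\tau,j)\setminus\{x\}$. A renaming function is $\lambda:\mathbb{N}_m\times\mathbb{W}\to\mathbb{W}$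 with $\lambda(j,0)=0$ for all $j$; it induces $\lambda^d(\langle a,b,c,d\rangle)=\langle a,b,c,\lambda(c,d)\rangle$, applied letterwise to sequences. Data Independence assumption: for all $n,m,v\ge1$ and all $\tau\in E(n,m,v)^*$, $\tau$ is a trace of $S(n,m,v)$ iff there are an unambiguous trace $\tau'$ of $S(n,m)$ and a renaming function $\lambda:\mathbb{N}_m\times\mathbb{W}\to\mathbb{W}_v$ with $\tau=\lambda^d(\tau')$. A sequence $\tau$ of memory events is serial if for every position $u$, letting $upto(\tau,u)=\{k\le u: op(\tau(k))=W,\ loc(\tau(k))=loc(\tau(u))\}$, we have $data(\tau(u))=0$ if $upto(\tau,u)=\emptyset$ and $data(\tau(u))=data(\tau(\max upto(\tau,u)))$ otherwise. For processor $i$, $M(\tau,i)=\{\langle u,v\rangle: u,v\in P(\tau,i),\ u<v\}$. The sequence $\tau$ is sequentially consistent if there is a permutation $f$ of $\mathbb{N}_{|\tau|}$ such that (C1) $\langle u,v\rangle\in M(\tau,i)$ for some $i$ implies $f(u)<f(v)$, and (C2) $\tau_{f^{-1}(1)}\tau_{f^{-1}(2)}\cdots\tau_{f^{-1}(|\tau|)}$ is serial. *)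

From Stdlib Require List.
From mathcomp Require Import all_boot all_fingroup.
Set Implicit Arguments. Unset Strict Implicit. Unset Printing Implicit Defensive.

Inductive opk := Rd | Wr.

Definition event := (opk * nat * nat * nat)%type.
Definition op (e : event) : opk := e.1.1.1.
Definition proc (e : event) : nat := e.1.1.2.
Definition loc (e : event) : nat := e.1.2.
Definition data (e : event) : nat := e.2.
Definition is_write (e : event) : bool := if op e is Wr then true else false.

Definition in_E (n m v : nat) (e : event) : Prop :=
  1 <= proc e <= n /\ 1 <= loc e <= m /\ data e <= v.

(* Runs of S(n,m,v) are words over E^a(n,m,v) = E(n,m,v) + Int n m v, where
   Int n m v is a finite type of internal events. *)
Definition letter (Int : nat -> nat -> nat -> finType) n m v :=
  (event + Int n m v)%type.

Definition over_alphabet Int n m v (r : seq (letter Int n m v)) : Prop :=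
  forall l, List.In l r -> match l with inl e => in_E n m v e | inr _ => True end.

Definition regular Int n m v (L : seq (letter Int n m v) -> Prop) : Prop :=
  exists (Q : finType) (q0 : Q) (delta : Q -> letter Int n m v -> Q) (F : pred Q),
    forall r, over_alphabet r -> (L r <-> F (foldl delta q0 r)).

Definition memory_system (Int : nat -> nat -> nat -> finType)
  (S : forall n m v, seq (letter Int n m v) -> Prop) : Prop :=
  forall n m v, 1 <= n -> 1 <= m -> 1 <= v ->
    (forall r, S n m v r -> over_alphabet r) /\ regular (S n m v).

Definition trace Int n m v (r : seq (letter Int n m v)) : seq event :=
  pmap (fun l => match l with inl e => Some e | inr _ => None end) r.

Definition is_trace_nmv Int (S : forall n m v, seq (letter Int n m v) -> Prop)
  n m v (t : seq event) : Prop :=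
  exists r, S n m v r /\ trace r = t.

Definition is_trace_nm Int (S : forall n m v, seq (letter Int n m v) -> Prop)
  n m (t : seq event) : Prop :=
  exists v, 1 <= v /\ is_trace_nmv S n m v t.

Definition ev0 : event := (Rd, 0, 0, 0).

(* Positions are 0-based internally (position k here is position k+1 in the paper). *)
Definition unambiguous (t : seq event) : Prop :=
  forall x, x < size t -> is_write (nth ev0 t x) ->
    data (nth ev0 t x) <> 0 /\
    forall y, y < size t -> y <> x -> is_write (nth ev0 t y) ->
      loc (nth ev0 t y) = loc (nth ev0 t x) ->
      data (nth ev0 t x) <> data (nth ev0 t y).

Definition renaming_into (m v : nat) (lam : nat -> nat -> nat) : Prop :=
  forall j, 1 <= j <= m -> lam j 0 = 0 /\ forall d, lam j d <= v.

Definition rename_d (lam : nat -> nat -> nat) (e : event) : event :=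
  (op e, proc e, loc e, lam (loc e) (data e)).

Definition data_independent Int (S : forall n m v, seq (letter Int n m v) -> Prop) : Prop :=
  forall n m v, 1 <= n -> 1 <= m -> 1 <= v ->
  forall t : seq event, (forall e, List.In e t -> in_E n m v e) ->
    (is_trace_nmv S n m v t <->
     exists t' lam, is_trace_nm S n m t' /\ unambiguous t' /\
       renaming_into m v lam /\ t = map (rename_d lam) t').

Definition upto (t : seq event) (u : nat) : seq nat :=
  [seq k <- iota 0 u.+1 | is_write (nth ev0 t k) && (loc (nth ev0 t k) == loc (nth ev0 t u))].

Definition serial (t : seq event) : Prop :=
  forall u, u < size t ->
    data (nth ev0 t u) =
      (if upto t u is [::] then 0 else data (nth ev0 t (last 0 (upto t u)))).

Definition sequentially_consistent (t : seq event) : Prop :=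
  exists f : {perm 'I_(size t)},
    (forall u w : 'I_(size t), proc (nth ev0 t u) = proc (nth ev0 t w) -> u < w -> f u < f w) /\
    serial [seq nth ev0 t ((f^-1)%g k) | k <- enum 'I_(size t)].

From mathcomp Require Import all_boot all_fingroup.

(* Seriality only compares the data of events at a common location with each
   other and with the initial value 0, so renaming the data location-wise by a
   map fixing 0 preserves it.  Hence every witness of sequential consistency
   of an unambiguous trace t' is also a witness for any renaming of t', and
   by Data Independence every trace of S(n,m) is such a renaming. *)

Lemma In_nth (T : Type) (x0 : T) (s : seq T) i :
  i < size s -> List.In (nth x0 s i) s.
Proof. by elim: s i => [|x s IHs] [|i] //= lt_i_s; [left | right; apply: IHs]. Qed.

Lemma In_map (T U : Type) (f : T -> U) (s : seq T) y :
  List.In y (map f s) <-> exists x, f x = y /\ List.In x s.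
Proof. exact: List.in_map_iff. Qed.

Lemma In_trace Int n m v (r : seq (letter Int n m v)) e :
  List.In e (trace r) -> List.In (inl e) r.
Proof.
elim: r => [|[e' | i] r IHr] //=; last by move/IHr; right.
by case=> [<- | /IHr]; [left | right].
Qed.

Lemma trace_in_E Int n m v (r : seq (letter Int n m v)) :
  over_alphabet r -> forall e, List.In e (trace r) -> in_E n m v e.
Proof. by move=> r_over e /In_trace; apply: r_over. Qed.

Lemma upto_rename lam (s : seq event) u :
  u < size s -> upto (map (rename_d lam) s) u = upto s u.
Proof.
move=> lt_u_s; apply: eq_in_filter => k; rewrite mem_iota add0n => /andP[_ le_k_u].
by rewrite !(nth_map ev0) // (leq_trans le_k_u).
Qed.

Lemma serial_rename lam (s : seq event) :
  (forall e, List.In e s -> lam (loc e) 0 = 0) ->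
  serial s -> serial (map (rename_d lam) s).
Proof.
move=> lam0 s_serial u; rewrite size_map => lt_u_s.
rewrite upto_rename // (nth_map ev0) // {1}/data /= s_serial //.
case def_up: (upto s u) => [|k ks] /=; first exact/lam0/In_nth.
have : last k ks \in upto s u by rewrite def_up mem_last.
rewrite mem_filter mem_iota add0n => /andP[/andP[_ /eqP loc_eq] /andP[_ le_u]].
by rewrite (nth_map ev0) ?(leq_trans le_u) // /rename_d /data /= -loc_eq.
Qed.

Lemma sequentially_consistent_rename lam (t : seq event) :
  (forall e, List.In e t -> lam (loc e) 0 = 0) ->
  sequentially_consistent t -> sequentially_consistent (map (rename_d lam) t).
Proof.
move=> lam0 [f [f_po f_serial]]; rewrite /sequentially_consistent size_map.
exists f; split=> [u w|]; first by rewrite !(nth_map ev0) //; apply: f_po.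
have -> : [seq nth ev0 (map (rename_d lam) t) ((f^-1)%g k) | k <- enum 'I_(size t)]
    = map (rename_d lam) [seq nth ev0 t ((f^-1)%g k) | k <- enum 'I_(size t)].
  by rewrite -map_comp; apply: eq_map => k /=; rewrite (nth_map ev0).
apply: serial_rename f_serial => _ /In_map[k [<- _]].
exact/lam0/In_nth.
Qed.

Lemma trace_renamed_unambiguous {Int} {S : forall n m v, seq (letter Int n m v) -> Prop}
    {n m t} :
  memory_system S -> data_independent S -> 1 <= n -> 1 <= m -> is_trace_nm S n m t ->
  exists t' lam, [/\ is_trace_nm S n m t', unambiguous t',
    forall e, List.In e t' -> lam (loc e) 0 = 0 & t = map (rename_d lam) t'].
Proof.
move=> S_mem S_di n_gt0 m_gt0 [v [v_gt0 t_trace]].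
have t_in_E : forall e, List.In e t -> in_E n m v e.
  have [r [r_run <-]] := t_trace.
  exact/trace_in_E/(S_mem n m v n_gt0 m_gt0 v_gt0).1.
have [t' [lam [t'_trace [t'_unamb [lam_ren def_t]]]]] :=
  (S_di n m v n_gt0 m_gt0 v_gt0 t t_in_E).1 t_trace.
exists t', lam; split=> // e e_in.
have [_ [loc_e _]] : in_E n m v (rename_d lam e).
  by apply: t_in_E; rewrite def_t; apply/In_map; exists e.
exact: (lam_ren _ loc_e).1.
Qed.

Theorem theorem4p1 (Int : nat -> nat -> nat -> finType)
  (S : forall n m v, seq (letter Int n m v) -> Prop) :
  memory_system S -> data_independent S ->
  forall n m, 1 <= n -> 1 <= m ->
    ((forall t, is_trace_nm S n m t -> sequentially_consistent t) <->
     (forall t, is_trace_nm S n m t -> unambiguous t -> sequentially_consistent t)).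
Proof.
move=> S_mem S_di n m n_gt0 m_gt0; split=> [sc_all t t_trace _ | sc_unamb t t_trace].
  exact: sc_all.
have [t' [lam [t'_trace t'_unamb lam0 ->]]] :=
  trace_renamed_unambiguous S_mem S_di n_gt0 m_gt0 t_trace.
exact: sequentially_consistent_rename lam0 (sc_unamb t' t'_trace t'_unamb).
Qed.
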